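(* Let $T_1$ and $T_2$ be subtrees of a tree $T$ such that $T=T_1\cup T_2$. Then $\operatorname{pw}(T)+1\le (\operatorname{pw}(T_1)+1)+(\operatorname{pw}(T_2)+1)$.
   Context: $\operatorname{pw}$ denotes pathwidth: the minimum, over all path decompositions (sequences of vertex subsets such that each edge lies in some set and each vertex lies in a non-empty consecutive run of sets), of the maximum set size minus 1. A subtree is a connected subgraph of $T$. *)

From Stdlib Require Import ClassicalEpsilon.
From mathcomp Require Import all_boot.
Set Implicit Arguments. Unset Strict Implicit. Unset Printing Implicit Defensive.

Section Graphs.
Variables (V : finType) (e : rel V).

Definition simple_graph : Prop := symmetric e /\ irreflexive e.

Definition connected_on (S : {set V}) : Prop :=
  S != set0 /\
  forall u v, u \in S -> v \in S ->
    connect [rel x y | [&& e x y, x \in S & y \in S]] u v.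

Definition has_cycle : Prop :=
  exists (x : V) (p : seq V),
    [/\ 2 <= size p, uniq (x :: p), path e x p & e (last x p) x].

Definition is_tree : Prop :=
  simple_graph /\ connected_on setT /\ ~ has_cycle.

(* path decomposition of the subgraph induced on S (a subgraph of a tree
   that is connected is induced) *)
Definition is_path_decomp (S : {set V}) (s : seq {set V}) : Prop :=
  [/\ forall B, B \in s -> B \subset S,
      forall u v, u \in S -> v \in S -> e u v ->
        exists2 B, B \in s & (u \in B) && (v \in B)
    & forall v, v \in S ->
        exists i j, (i <= j < size s) /\
          forall k, (v \in nth set0 s k) = (i <= k <= j)].

Definition has_pd_of_width_le (S : {set V}) (k : nat) : Prop :=
  exists s, is_path_decomp S s /\ forall B, B \in s -> #|B| <= k.+1.

Lemma has_pd_exists (S : {set V}) : exists k, has_pd_of_width_le S k.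
Proof.
exists #|S|; exists [:: S]; split; last first.
  by move=> B; rewrite inE => /eqP ->.
split.
- by move=> B; rewrite inE => /eqP ->.
- by move=> u v uS vS _; exists S; rewrite ?inE ?uS ?vS.
- move=> v vS; exists 0, 0; split => // [[|[|k]]] //=; by rewrite inE.
Qed.

Definition has_pd_of_width_leb (S : {set V}) (k : nat) : bool :=
  if excluded_middle_informative (has_pd_of_width_le S k) then true else false.

Lemma has_pd_exists_bool (S : {set V}) : exists k, has_pd_of_width_leb S k.
Proof.
have [k Hk] := has_pd_exists S; exists k; rewrite /has_pd_of_width_leb.
by case: excluded_middle_informative.
Qed.

Definition pw (S : {set V}) : nat := ex_minn (has_pd_exists_bool S).
End Graphs.

From Stdlib Require Import ClassicalEpsilon.
From mathcomp Require Import all_boot zify.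
Set Implicit Arguments. Unset Strict Implicit. Unset Printing Implicit Defensive.

(* Let s1 and s2 be optimal path decompositions of T1 and T2. Every vertex v
   outside T1 lies in T2, and its component in T - T1 is attached to T1 at a
   single vertex a(v): two attachment points, joined inside the connected T1,
   would close a cycle. Replace the q-th bag B of s1 by the block
   B, B + D_1, ..., B + D_m, where D_r consists of the vertices of the r-th bag
   of s2 outside T1 whose attachment first occurs in bag q of s1. A vertex of
   T1 then occupies a run of whole blocks, a vertex v outside T1 occupies its
   s2-run inside the block of a(v), and an edge leaving T1 joins v to a(v), so
   it is covered by the copy of the s2-bag covering it. Each new bag has at
   most (pw(T1) + 1) + (pw(T2) + 1) vertices. *)

Lemma restricted_path_all (T : eqType) (r : rel T) (P : pred T) x p :
  path [rel a b | [&& r a b, P a & P b]] x p -> all P p.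
Proof. by elim: p x => //= y p IHp x /andP[/and3P[_ _ ->] /IHp]. Qed.

Lemma restricted_connect_closed (T : finType) (r : rel T) (P : pred T) x y :
  connect [rel a b | [&& r a b, P a & P b]] x y -> P x -> P y.
Proof.
have closedP : closed [rel a b | [&& r a b, P a & P b]] P.
  by move=> a b /and3P[_ Pa Pb]; rewrite !unfold_in Pa Pb.
by move/(closed_connect closedP); rewrite !unfold_in => <-.
Qed.

Lemma divn_interval M i j k : 0 < M ->
  (i <= k %/ M <= j) = (i * M <= k <= j * M + M.-1).
Proof. by move=> M0; rewrite leq_divRL // -[k %/ M <= j]ltnS ltn_divLR // mulSn; lia. Qed.

Lemma divn_modn_interval M q i j k : j < M ->
  [&& q == k %/ M, i <= k %% M & k %% M <= j] = (q * M + i <= k <= q * M + j).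
Proof.
move=> jM; have rM : k %% M < M by rewrite ltn_pmod // (leq_ltn_trans _ jM).
rewrite [in RHS](divn_eq k M); move: (k %/ M) (k %% M) rM => a r rM.
case: (ltngtP q a) => [lt|lt|->]; last by rewrite !leq_add2l.
all: apply/esym/negbTE; have := leq_mul lt (leqnn M); rewrite mulSn; lia.
Qed.

Section Attachment.
Variables (V : finType) (e : rel V) (S : {set V}).
Hypotheses (e_sym : symmetric e) (acyclic : ~ has_cycle e) (S_conn : connected_on e S).

Definition out_edge := [rel x y | [&& e x y, x \notin S & y \notin S]].

Lemma out_edge_sym : symmetric out_edge.
Proof. by move=> x y /=; rewrite e_sym (andbC (x \notin S)). Qed.

Definition attached u w := [exists c, connect out_edge u c && e c w].

Lemma attached_uniq u w w' : u \notin S -> w \in S -> w' \in S ->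
  attached u w -> attached u w' -> w = w'.
Proof.
move=> uS wS w'S /existsP[c /andP[uc ecw]] /existsP[c' /andP[uc' ec'w']].
case: (eqVneq w w') => // neq_ww'; exfalso.
have c'c : connect out_edge c' c.
  by apply: connect_trans _ uc; rewrite (sym_connect_sym out_edge_sym).
have [_ /(_ w w' wS w'S) /connectP[q0 path_q0 w'_last]] := S_conn.
case/connectP: c'c => p0 path_p0 c_last.
move: w'_last c_last; case: (shortenP path_q0) => q path_q uniq_q _ w'_last.
case: (shortenP path_p0) => p path_p uniq_p _ c_last.
have in_S : all [in S] (w :: q) by rewrite /= wS (restricted_path_all path_q).
have out_S : all [predC S] (c' :: p).
  by rewrite /= (restricted_connect_closed uc' uS) (restricted_path_all path_p).
apply: acyclic; exists w, (q ++ c' :: p); split.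
- case: q {path_q uniq_q in_S} w'_last => [/= w'w|? ?]; last by rewrite size_cat addnS.
  by rewrite w'w eqxx in neq_ww'.
- rewrite -cat_cons cat_uniq uniq_q uniq_p andbT; apply/hasPn => x /(allP out_S) xS.
  by apply: contra xS => /(allP in_S).
- rewrite cat_path (sub_path _ path_q) /=; last by move=> a b /andP[].
  rewrite -w'_last e_sym ec'w' (sub_path _ path_p) //; by move=> a b /andP[].
- by rewrite last_cat /= -c_last.
Qed.

Variable a0 : V.
Hypothesis a0_in : a0 \in S.

Definition attachment u := odflt a0 [pick w in S | attached u w].

Lemma attachment_in u : attachment u \in S.
Proof. by rewrite /attachment; case: pickP => //= w /andP[]. Qed.

Lemma attachment_out_edge u v : out_edge u v -> attachment u = attachment v.
Proof.
move=> uv; rewrite /attachment; congr odflt; apply: eq_pick => w /=.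
congr (_ && _); apply: eq_existsb => c.
by rewrite (same_connect (sym_connect_sym out_edge_sym) (@connect1 _ out_edge _ _ uv)).
Qed.

Lemma attachment_edge u w : u \notin S -> w \in S -> e u w -> attachment u = w.
Proof.
move=> uS wS uw; have att_uw : attached u w by apply/existsP; exists u; rewrite connect0.
rewrite /attachment; case: pickP => [w' /andP[w'S att_uw'] | /(_ w)].
  exact: attached_uniq uS w'S wS att_uw' att_uw.
by rewrite wS att_uw.
Qed.
End Attachment.

Lemma nth_set0_prop (T : finType) (P : {set T} -> Prop) (s : seq {set T}) k :
  P set0 -> (forall B, B \in s -> P B) -> P (nth set0 s k).
Proof.
move=> P0 Ps; case: (ltnP k (size s)) => [/(mem_nth set0)/Ps // | ?].
by rewrite nth_default.
Qed.

Lemma path_decomp_has_bag (V : finType) (e : rel V) S s v :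
  is_path_decomp e S s -> v \in S -> has (fun B : {set V} => v \in B) s.
Proof.
case=> _ _ /[apply] -[i [j [/andP[ij js] memv]]].
by apply/(has_nthP set0); exists i; rewrite ?memv ?ij ?leqnn // (leq_ltn_trans ij).
Qed.

Section MergeDecompositions.
Variables (V : finType) (e : rel V) (S1 S2 : {set V}) (anc : V -> V).
Variables (s1 s2 : seq {set V}) (k1 k2 : nat).
Hypotheses (e_sym : symmetric e)
  (pd1 : is_path_decomp e S1 s1) (pd2 : is_path_decomp e S2 s2)
  (width1 : forall B, B \in s1 -> #|B| <= k1.+1)
  (width2 : forall B, B \in s2 -> #|B| <= k2.+1)
  (S12_cover : forall v, v \in S1 :|: S2)
  (S12_edge : forall u v, e u v ->
     ((u \in S1) && (v \in S1)) || ((u \in S2) && (v \in S2)))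
  (anc_in : forall u, anc u \in S1)
  (anc_out_edge : forall u v, out_edge e S1 u v -> anc u = anc v)
  (anc_edge : forall u w, u \notin S1 -> w \in S1 -> e u w -> anc u = w).

Local Notation M := (size s2).+1.

Definition home v := find (fun B : {set V} => v \in B) s1.

Lemma home_lt v : v \in S1 -> home v < size s1.
Proof. by move/(path_decomp_has_bag pd1); rewrite -has_find. Qed.

Lemma mem_home v : v \in S1 -> v \in nth set0 s1 (home v).
Proof. by move/(path_decomp_has_bag pd1)/(nth_find set0). Qed.

Definition bag q r := nth set0 s1 q :|:
  [set v in nth set0 s2 r.-1 | [&& 0 < r, v \notin S1 & home (anc v) == q]].

Definition merged := mkseq (fun t => bag (t %/ M) (t %% M)) (size s1 * M).

Lemma nth_merged t :
  nth set0 merged t = if t < size s1 * M then bag (t %/ M) (t %% M) else set0.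
Proof.
case: ltnP => tN; first by rewrite nth_mkseq.
by rewrite nth_default // size_mkseq.
Qed.

Lemma bag_in_merged q r : q < size s1 -> r < M -> bag q r \in merged.
Proof.
move=> qs rM; have tN : q * M + r < size s1 * M.
  by apply: leq_trans (leq_mul qs (leqnn M)); rewrite mulSn; lia.
have -> : bag q r = nth set0 merged (q * M + r).
  by rewrite nth_merged tN divnMDl // divn_small // addn0 modnMDl modn_small.
by rewrite mem_nth // size_mkseq.
Qed.

Lemma mem_bag_in v q r : v \in S1 -> (v \in bag q r) = (v \in nth set0 s1 q).
Proof. by move=> vS; rewrite !inE vS /= !andbF orbF. Qed.

Lemma mem_bag_out v q r : v \notin S1 ->
  (v \in bag q r) = [&& v \in nth set0 s2 r.-1, 0 < r & home (anc v) == q].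
Proof.
move=> vS; have [subS1 _ _] := pd1.
have sub : nth set0 s1 q \subset S1.
  by apply: (nth_set0_prop (P := fun B => B \subset S1)); [exact: sub0set | exact: subS1].
by rewrite !inE (contraNF (subsetP sub v) vS) vS.
Qed.

Lemma edge_out_in_merged u v : e u v -> u \notin S1 ->
  exists2 B, B \in merged & (u \in B) && (v \in B).
Proof.
move=> uv uS; have /andP[uS2 vS2] : (u \in S2) && (v \in S2).
  by have := S12_edge uv; rewrite (negbTE uS).
have [_ /(_ u v uS2 vS2 uv) [D Ds /andP[uD vD]] _] := pd2.
exists (bag (home (anc u)) (index D s2).+1).
  by apply: bag_in_merged; rewrite ?home_lt // ltnS index_mem.
rewrite mem_bag_out //= nth_index // uD eqxx /=.
case vS: (v \in S1); first by rewrite mem_bag_in // (anc_edge uS vS uv) mem_home.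
by rewrite mem_bag_out ?vS //= nth_index // vD (@anc_out_edge u v) //= uv uS vS.
Qed.

Lemma edge_in_merged u v : e u v -> exists2 B, B \in merged & (u \in B) && (v \in B).
Proof.
move=> uv; case uS: (u \in S1); last exact: edge_out_in_merged (negbT uS).
case vS: (v \in S1); last first.
  rewrite e_sym in uv; have [B ? uvB] := edge_out_in_merged uv (negbT vS).
  by exists B; rewrite // andbC.
have [_ /(_ u v uS vS uv) [B Bs uvB] _] := pd1.
exists (bag (index B s1) 0); first by apply: bag_in_merged; rewrite ?index_mem.
by rewrite !mem_bag_in // nth_index.
Qed.

Lemma merged_interval_in v : v \in S1 -> exists i j,
  i <= j < size merged /\ forall k, (v \in nth set0 merged k) = (i <= k <= j).
Proof.
move=> vS; have [_ _ /(_ v vS) [i [j [/andP[ij js] memv]]]] := pd1.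
exists (i * M), (j * M + size s2); rewrite size_mkseq; split.
  have := leq_mul ij (leqnn M); have := leq_mul js (leqnn M); rewrite mulSn; lia.
move=> k; rewrite nth_merged; case: ltnP => kN.
  by rewrite mem_bag_in // memv divn_interval.
rewrite in_set0; apply/esym/negbTE/negP => /andP[_].
have := leq_mul js (leqnn M); rewrite mulSn; lia.
Qed.

Lemma merged_interval_out v : v \notin S1 -> exists i j,
  i <= j < size merged /\ forall k, (v \in nth set0 merged k) = (i <= k <= j).
Proof.
move=> vS; have vS2 : v \in S2 by move: (S12_cover v); rewrite inE (negbTE vS).
have [_ _ /(_ v vS2) [i [j [/andP[ij js] memv]]]] := pd2.
have qs := home_lt (anc_in v); set q := home (anc v) in qs *.
exists (q * M + i.+1), (q * M + j.+1); rewrite size_mkseq; split.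
  have := leq_mul qs (leqnn M); rewrite mulSn; lia.
move=> k; rewrite -(@divn_modn_interval M q i.+1 j.+1 k js) nth_merged; case: ltnP => kN.
  rewrite mem_bag_out // memv; case: (k %% M) => [|r] /=; first by rewrite !andbF.
  by rewrite andbC.
rewrite in_set0; apply/esym/negbTE/negP => /and3P[/eqP qk _ _].
by move: (leq_div2r M kN); rewrite mulnK // -qk leqNgt qs.
Qed.

Lemma merged_path_decomp : is_path_decomp e setT merged.
Proof.
split=> [B _ | u v _ _ /edge_in_merged // | v _]; first exact: subsetT.
case vS: (v \in S1); first exact: merged_interval_in.
by apply: merged_interval_out; rewrite vS.
Qed.

Lemma merged_width B : B \in merged -> #|B| <= (k1 + k2 + 1).+1.
Proof.
case/mapP => t _ ->; apply: leq_trans (leq_card_setU _ _) _.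
rewrite addn1 -addnS -addSn; apply: leq_add.
  by apply: (nth_set0_prop (P := fun B => #|B| <= k1.+1)); rewrite ?cards0.
apply: (@leq_trans #|nth set0 s2 (t %% M).-1|).
  by apply/subset_leq_card/subsetP => v; rewrite inE => /andP[].
by apply: (nth_set0_prop (P := fun B => #|B| <= k2.+1)); rewrite ?cards0.
Qed.
End MergeDecompositions.

Lemma pw_witness (V : finType) (e : rel V) S : has_pd_of_width_le e S (pw e S).
Proof.
rewrite /pw; case: ex_minnP => k + _.
by rewrite /has_pd_of_width_leb; case: excluded_middle_informative.
Qed.

Lemma pw_minimal (V : finType) (e : rel V) S k : has_pd_of_width_le e S k -> pw e S <= k.
Proof.
move=> pdk; rewrite /pw; case: ex_minnP => m _; apply.
by rewrite /has_pd_of_width_leb; case: excluded_middle_informative.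
Qed.

Theorem lemma7 (V : finType) (e : rel V) (S1 S2 : {set V}) :
  is_tree e ->
  connected_on e S1 -> connected_on e S2 ->
  (forall v, v \in S1 :|: S2) ->
  (forall u v, e u v -> ((u \in S1) && (v \in S1)) || ((u \in S2) && (v \in S2))) ->
  pw e setT + 1 <= (pw e S1 + 1) + (pw e S2 + 1).
Proof.
move=> [[e_sym _] [_ acyclic]] S1_conn _ S12_cover S12_edge.
have [a0 a0_in] : exists a0, a0 \in S1 by case: S1_conn => /set0Pn.
have [s1 [pd1 width1]] := pw_witness e S1.
have [s2 [pd2 width2]] := pw_witness e S2.
suff : pw e setT <= pw e S1 + pw e S2 + 1 by lia.
apply: pw_minimal; exists (merged S1 (attachment e S1 a0) s1 s2).
split; last exact: merged_width.
apply: (merged_path_decomp e_sym pd1 pd2 S12_cover S12_edge).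
- exact: attachment_in.
- exact: attachment_out_edge.
- exact: attachment_edge.
Qed.
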